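(* Let a blockchain computation contain a network split, and let $B_1$ and $B_2$ be branches of the global blockchain tree mined in the two different partitions created by the split. If $B_1$ and $B_2$ have their accounts split on the same seed block, then $B_1$ and $B_2$ are mergeable.
   Context: Peers communicate by message passing; a partition is a set of peers that can communicate. A network split is an action that separates the network into two nonempty partitions; after it, messages are delivered only within the sender's partition. Peers mine transactions into blocks (one transaction per block); each block links to one earlier block, so the collection of all mined blocks (the global blockchain) is a tree rooted at a unique genesis block. A branch is a chain of blocks from the genesis to a leaf. A transaction transfers funds from one source account to one target account. The balance of an account $a$ with respect to a block $b$ is the total of funds transferred into $a$ minus the total transferred out of $a$ by the transactions on the chain from the genesis to $b$. A transaction is valid (with respect to a chain) if applying it leaves the source account with nonnegative balance. A seed is the last block mined on a branch before the split. At a split, the accounts are split in a seed: each account's balance at the seed is divided between the two partitions into nonnegative shares summing to the balance at the seed, and post-split blocks in each partition are validated against that partition's share. A transaction is confirmed if it lies on a permanent (infinite) branch and rejected otherwise. A branch merge of two branches is an arbitrary interleaving of their transactions that preserves the order of transactions of each branch. Two branches are mergeable if all transactions mined before the split are resolved (confirmed/rejected) identically by both, and every branch merge of them keeps every transaction of the two branches valid. *)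

From HB Require Import structures.
From mathcomp Require Import all_boot all_order all_algebra.
Set Implicit Arguments. Unset Strict Implicit. Unset Printing Implicit Defensive.
Import Order.TTheory GRing.Theory Num.Theory.
Local Open Scope ring_scope.

Record tx (A : Type) := Tx { src : A; tgt : A; amt : nat }.

Definition flow (A : eqType) (a : A) (t : tx A) : int :=
  (if tgt t == a then (amt t)%:Z else 0) - (if src t == a then (amt t)%:Z else 0).

Definition bal_from (A : eqType) (b : A -> int) (s : seq (tx A)) (a : A) : int :=
  b a + \sum_(u <- s) flow a u.

Definition valid_from (A : eqType) (b : A -> int) (s : seq (tx A)) : Prop :=
  forall p t q, s = p ++ t :: q -> 0 <= bal_from b (rcons p t) (src t).

Inductive interleave (T : Type) : seq T -> seq T -> seq T -> Prop :=
| il_nil : interleave [::] [::] [::]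
| il_l x s1 s2 m : interleave s1 s2 m -> interleave (x :: s1) s2 (x :: m)
| il_r x s1 s2 m : interleave s1 s2 m -> interleave s1 (x :: s2) (x :: m).

(* Blocks form a tree via
   [parent] (each block links to one earlier block), rooted at [genesis].
   [pre_split b] : block b was mined before the split; blocks mined before
   the split only link to blocks mined before the split.
   [part1 b] : a post-split block b was mined in the first partition
   (otherwise in the second one). [endow] are the genesis funds. *)
Record computation (A : eqType) := Computation {
  blk : eqType;
  genesis : blk;
  parent : blk -> option blk;
  txof : blk -> tx A;
  endow : A -> nat;
  pre_split : pred blk;
  part1 : pred blk;
  genesis_root : parent genesis = None;
  genesis_pre : pre_split genesis;
  pre_closed : forall b b', parent b = Some b' -> pre_split b -> pre_split b'
}.

Arguments pre_split [A] c _.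
Arguments part1 [A] c _.

Section Chains.
Variables (A : eqType) (C : computation A).

Definition is_chain (c : seq (blk C)) : Prop :=
  path (fun x y => parent y == Some x) (genesis C) c.

Definition is_leaf (b : blk C) : Prop := forall b', parent b' <> Some b.

(* A branch: a chain from the genesis to a leaf (represented by the list of
   non-genesis blocks). *)
Definition is_branch (c : seq (blk C)) : Prop :=
  is_chain c /\ is_leaf (last (genesis C) c).

Definition on_branch (c : seq (blk C)) (b : blk C) : bool := b \in genesis C :: c.

(* Transactions of a chain (the genesis carries the endowment instead). *)
Definition pre_txs (c : seq (blk C)) : seq (tx A) :=
  map (@txof _ C) (filter (pre_split C) c).
Definition post_txs (c : seq (blk C)) : seq (tx A) :=
  map (@txof _ C) (filter (predC (pre_split C)) c).

Definition seed (c : seq (blk C)) : blk C :=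
  last (genesis C) (filter (pre_split C) c).

Definition endow_int (a : A) : int := (endow C a)%:Z.

Definition balance_at (b : blk C) (a : A) (bl : int) : Prop :=
  exists c, [/\ is_chain c, last (genesis C) c = b &
                bl = bal_from endow_int (map (@txof _ C) c) a].

Definition split_in (s : blk C) (sh1 sh2 : A -> int) : Prop :=
  forall a bl, balance_at s a bl -> [/\ 0 <= sh1 a, 0 <= sh2 a & sh1 a + sh2 a = bl].

Definition mined_valid (c : seq (blk C)) (sh : A -> int) : Prop :=
  valid_from endow_int (pre_txs c) /\ valid_from sh (post_txs c).

(* Mergeability: pre-split blocks resolved identically, and every branch merge
   (common pre-split part followed by an arbitrary order-preserving
   interleaving of the post-split transactions) keeps every transaction valid. *)
Definition mergeable (c1 c2 : seq (blk C)) : Prop :=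
  (forall b, pre_split C b -> on_branch c1 b = on_branch c2 b) /\
  forall m, interleave (post_txs c1) (post_txs c2) m ->
    valid_from endow_int (pre_txs c1 ++ m).

End Chains.

(* Pre-split blocks are closed under taking parents,
     so along any chain the pre-split blocks form a prefix, itself a chain
     ending at the seed.  Chains are determined by their last block
     ([chain_unique]), so two branches with the same seed share the same
     pre-split part, and hence agree on every pre-split block.
   - Validity of merges.  In a prefix of an interleaving of s1 and s2 the net
     flow of an account is the flow of a prefix of s1 plus that of a prefix
     of s2 ([interleave_prefix_sum]); validity from nonnegative starting
     balances keeps all prefix balances nonnegative ([valid_prefix_nonneg]).
     Since the two shares add up to the balance at the seed, every transaction
     of a merge leaves its source nonnegative ([valid_merge]). *)
From HB Require Import structures.
From mathcomp Require Import all_boot all_order all_algebra.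
From mathcomp Require Import lra.
Set Implicit Arguments. Unset Strict Implicit. Unset Printing Implicit Defensive.
Import Order.TTheory GRing.Theory Num.Theory.
Local Open Scope ring_scope.

(* Validity from a nonnegative balance of [a] keeps [a] nonnegative after every
   prefix: only transactions with source [a] decrease it, and those are valid. *)
Lemma valid_prefix_nonneg (A : eqType) (b : A -> int) (s : seq (tx A)) (a : A) :
  valid_from b s -> 0 <= b a -> forall p q, s = p ++ q -> 0 <= bal_from b p a.
Proof.
move=> Vs ba_ge0 p; elim/last_ind: p => [|p t IHp] q Es.
  by rewrite /bal_from big_nil addr0.
have [<-|src_neq] := eqVneq (src t) a.
  by apply: (Vs p t q); rewrite Es cat_rcons.
have := IHp (t :: q); rewrite -cat_rcons => /(_ Es).
rewrite /bal_from -cats1 big_cat big_seq1 /flow (negbTE src_neq) subr0 addrA.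
by move=> bal_ge0; apply: addr_ge0 => //; case: ifP.
Qed.

Lemma interleave_prefix_sum (T : Type) (f : T -> int) s1 s2 m :
  interleave s1 s2 m -> forall k, exists p1 q1 p2 q2,
    [/\ s1 = p1 ++ q1, s2 = p2 ++ q2 &
     \sum_(u <- take k m) f u = \sum_(u <- p1) f u + \sum_(u <- p2) f u].
Proof.
elim=> [|x {}s1 {}s2 {}m _ IH|x {}s1 {}s2 {}m _ IH] k.
- by exists [::], [::], [::], [::]; rewrite !big_nil addr0.
- case: k => [|k].
    by exists [::], (x :: s1), [::], s2; rewrite /= !big_nil addr0.
  have [p1 [q1 [p2 [q2 [-> -> Esum]]]]] := IH k.
  by exists (x :: p1), q1, p2, q2; rewrite /= !big_cons Esum addrA.
- case: k => [|k].
    by exists [::], s1, [::], (x :: s2); rewrite /= !big_nil addr0.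
  have [p1 [q1 [p2 [q2 [-> -> Esum]]]]] := IH k.
  by exists p1, q1, (x :: p2), q2; rewrite /= !big_cons Esum addrCA.
Qed.

Lemma cat_cons_split (T : Type) (s m p q : seq T) t :
  s ++ m = p ++ t :: q ->
  (exists q', s = p ++ t :: q') \/ (exists m', p = s ++ m' /\ m = m' ++ t :: q).
Proof.
elim: s p => [|x s IH] p /=; first by move=> ->; right; exists p.
case: p => [|y p] /= [-> Es]; first by left; exists s.
case: (IH p Es) => [[q' ->]|[m' [-> ->]]]; first by left; exists q'.
by right; exists m'.
Qed.

Lemma valid_merge (A : eqType) (b sh1 sh2 : A -> int) (s s1 s2 m : seq (tx A)) :
  (forall a, [/\ 0 <= sh1 a, 0 <= sh2 a & sh1 a + sh2 a = bal_from b s a]) ->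
  valid_from b s -> valid_from sh1 s1 -> valid_from sh2 s2 ->
  interleave s1 s2 m -> valid_from b (s ++ m).
Proof.
move=> shares Vs V1 V2 Hm p t q Es.
case: (cat_cons_split Es) => [[q' Eq]|[m' [-> Em]]]; first exact: Vs Eq.
set a := src t.
have take_t : rcons m' t = take (size m').+1 m.
  by rewrite Em take_cat ltnNge leqnSn /= subSnn /= take0 cats1.
have [p1 [q1 [p2 [q2 [E1 E2 Esum]]]]] :=
  interleave_prefix_sum (flow a) Hm (size m').+1.
have [sh1_ge0 sh2_ge0 sh_sum] := shares a.
have bal1_ge0 := valid_prefix_nonneg V1 sh1_ge0 E1.
have bal2_ge0 := valid_prefix_nonneg V2 sh2_ge0 E2.
move: sh_sum bal1_ge0 bal2_ge0.
rewrite rcons_cat /bal_from big_cat take_t Esum /=.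
lra.
Qed.

Lemma path_filter_prefix (T : Type) (R : rel T) (P : pred T) x c :
  (forall x y, R x y -> P y -> P x) -> path R x c ->
  c = filter P c ++ filter (predC P) c.
Proof.
move=> P_back; elim: c x => [|y c IH] x //= /andP[_ pc].
case: ifP => Py /=; first by rewrite -(IH y pc).
have all_notP : all (predC P) c.
  elim: c y {IH} pc Py => [|z c IHc] y //= /andP[Ryz pc] Py.
  have Pz : P z = false by apply/negbTE/negP => /(P_back _ _ Ryz); rewrite Py.
  by rewrite /= Pz (IHc z).
have -> : filter P c = [::].
  by elim: c {IH pc} all_notP => //= z c' IHc /andP[/negbTE -> /IHc].
by rewrite (all_filterP all_notP).
Qed.

Section Chains.
Variables (A : eqType) (C : computation A).

(* A chain is determined by its last block, since each block has one parent. *)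
Lemma chain_unique (p1 p2 : seq (blk C)) :
  is_chain p1 -> is_chain p2 -> last (genesis C) p1 = last (genesis C) p2 ->
  p1 = p2.
Proof.
elim/last_ind: p1 p2 => [|p1 y1 IH] p2; case/lastP: p2 => [|p2 y2] //=;
  rewrite /is_chain ?rcons_path ?last_rcons.
- by move=> _ /andP[_ /eqP h] E; rewrite -E genesis_root in h.
- by move=> /andP[_ /eqP h] _ E; rewrite E genesis_root in h.
move=> /andP[ch1 /eqP h1] /andP[ch2 /eqP h2] Elast; subst y2.
by rewrite h1 in h2; case: h2 => /(IH _ ch1 ch2) ->.
Qed.

Lemma pre_split_chain (c : seq (blk C)) :
  is_chain c -> is_chain (filter (pre_split C) c).
Proof.
move=> ch; have P_back : forall x y : blk C, parent y == Some x ->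
    pre_split C y -> pre_split C x by move=> x y /eqP; apply: pre_closed.
move: (ch); rewrite /is_chain {1}(path_filter_prefix P_back ch) cat_path.
by case/andP.
Qed.

Lemma same_seed_resolution (c1 c2 : seq (blk C)) :
  is_chain c1 -> is_chain c2 -> seed c1 = seed c2 ->
  forall b, pre_split C b -> on_branch c1 b = on_branch c2 b.
Proof.
move=> ch1 ch2 Eseed b Pb.
have Epre : filter (pre_split C) c1 = filter (pre_split C) c2.
  by apply: chain_unique => //; exact: pre_split_chain.
have mem_pre c : (b \in c) = (b \in filter (pre_split C) c) by rewrite mem_filter Pb.
by rewrite /on_branch !inE mem_pre [b \in c2]mem_pre Epre.
Qed.

Lemma seed_balance (c : seq (blk C)) (a : A) :
  is_chain c -> balance_at (seed c) a (bal_from (endow_int C) (pre_txs c) a).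
Proof. by move=> ch; exists (filter (pre_split C) c); split=> //; apply: pre_split_chain. Qed.

End Chains.

Theorem proposition1 (A : eqType) (C : computation A)
    (c1 c2 : seq (blk C)) (sh1 sh2 : A -> int) :
  is_branch c1 -> is_branch c2 ->
  (* B1 mined (after the split) in the first partition, B2 in the second *)
  (forall b, b \in c1 -> ~~ pre_split C b -> part1 C b) ->
  (forall b, b \in c2 -> ~~ pre_split C b -> ~~ part1 C b) ->
  (* both branches have their accounts split on the same seed s *)
  seed c1 = seed c2 ->
  split_in (seed c1) sh1 sh2 ->
  mined_valid c1 sh1 -> mined_valid c2 sh2 ->
  mergeable c1 c2.
Proof.
move=> [ch1 _] [ch2 _] _ _ Eseed split_seed [V1pre V1post] [_ V2post].
split; first exact: same_seed_resolution.
move=> m Hm; apply: (valid_merge _ V1pre V1post V2post Hm) => a.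
exact/split_seed/seed_balance.
Qed.
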